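(* Let $S$ be a semigroup generated by a finite set $A$. Then $S$ is right simple if and only if the semimetric space $(S,d_A)$ is quasi-metric.
   Context: $d_A(x,y)=\inf\{|w|:w\in A^*,\ xw=y\}$, where $A^*$ is the free monoid on $A$ (empty word allowed) and $\inf\emptyset=\infty$. A semigroup is right simple if it has a single $\mathcal{R}$-class, i.e. $xS^1=yS^1$ for all $x,y\in S$ ($S^1$ being $S$ with an identity adjoined). A semimetric space $(X,d)$ (distance values in $\mathbb{R}^{\ge0}\cup\{\infty\}$, zero exactly on the diagonal, triangle inequality, not necessarily symmetric) is quasi-metric if it is strongly connected (no two points at distance $\infty$) and there exist $1\le\lambda<\infty$, $0\le\epsilon<\infty$ with $d(y,x)\le\lambda d(x,y)+\epsilon$ for all $x,y\in X$. *)

From Stdlib Require Import Reals List.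
From Coquelicot Require Import Coquelicot.
Open Scope R_scope.
Import ListNotations.

Definition associative_op {S : Type} (mul : S -> S -> S) : Prop :=
  forall x y z, mul x (mul y z) = mul (mul x y) z.

Definition word_over {S : Type} (A : list S) (w : list S) : Prop :=
  List.Forall (fun a => In a A) w.

Definition act {S : Type} (mul : S -> S -> S) (x : S) (w : list S) : S :=
  fold_left mul w x.

(* Value in S of a nonempty word a1 ... an. *)
Definition eval_word {S : Type} (mul : S -> S -> S) (a : S) (w : list S) : S :=
  act mul a w.

Definition generated_by {S : Type} (mul : S -> S -> S) (A : list S) : Prop :=
  forall s : S, exists a w, word_over A (a :: w) /\ s = eval_word mul a w.

(* d_A(x,y) = inf { |w| : w in A^*, x w = y }, with inf of the empty set = +oo. *)
Definition d_A {S : Type} (mul : S -> S -> S) (A : list S) (x y : S) : Rbar :=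
  Glb_Rbar (fun r => exists w, word_over A w /\ act mul x w = y
                               /\ r = INR (length w)).

(* S^1 = S with an identity adjoined (None is the identity). *)
Definition mul1 {S : Type} (mul : S -> S -> S) (x : S) (u : option S) : S :=
  match u with None => x | Some s => mul x s end.

(* Right simple: x S^1 = y S^1 for all x, y. *)
Definition right_simple {S : Type} (mul : S -> S -> S) : Prop :=
  forall x y z : S,
    (exists u : option S, z = mul1 mul x u) <-> (exists u : option S, z = mul1 mul y u).

Definition semimetric {X : Type} (d : X -> X -> Rbar) : Prop :=
  (forall x y, Rbar_le (Finite 0) (d x y) /\ d x y <> m_infty) /\
  (forall x y, d x y = Finite 0 <-> x = y) /\
  (forall x y z, Rbar_le (d x z) (Rbar_plus (d x y) (d y z))).

Definition quasi_metric {X : Type} (d : X -> X -> Rbar) : Prop :=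
  semimetric d /\
  (forall x y, d x y <> p_infty) /\
  (exists lam eps : R, 1 <= lam /\ 0 <= eps /\
     forall x y, Rbar_le (d y x) (Rbar_plus (Rbar_mult (Finite lam) (d x y)) (Finite eps))).

(* If S is right simple, every generator b can be recovered from b a by a word of
   length at most some uniform L (A is finite).  Every x ends with a generator, and
   along a path x -> x a1 -> x a1 a2 -> ... each step can be undone by such a word
   (left multiplication by the prefix preserves it), so d(xw, x) <= L |w|: this is
   the quasi-metric inequality.  Conversely, finiteness of d_A means y is in x S^1
   for all x, y, which is right simplicity. *)

From Stdlib Require Import Reals List Lia Lra Classical.
From Coquelicot Require Import Coquelicot.
Import ListNotations.
Open Scope R_scope.

Section WordAction.
Context {S : Type} (mul : S -> S -> S).

Lemma act_app x u v : act mul x (u ++ v) = act mul (act mul x u) v.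
Proof. apply fold_left_app. Qed.

Lemma act_cons x a w : act mul x (a :: w) = act mul (mul x a) w.
Proof. reflexivity. Qed.

Lemma act_mul_l (Hassoc : associative_op mul) z c w :
  act mul (mul z c) w = mul z (act mul c w).
Proof.
  revert c; induction w as [|a w IH]; intros c; [reflexivity|].
  rewrite !act_cons, <- Hassoc. apply IH.
Qed.

End WordAction.

Section Distance.
Context {S : Type} (mul : S -> S -> S) (A : list S).

Definition reachable (x y : S) : Prop :=
  exists w, word_over A w /\ act mul x w = y.

Definition reachable_within (n : nat) (x y : S) : Prop :=
  exists w, word_over A w /\ (length w <= n)%nat /\ act mul x w = y.

Lemma reachable_within_mono m n x y :
  (m <= n)%nat -> reachable_within m x y -> reachable_within n x y.
Proof. intros Hmn [w [Hw [Hl Hxy]]]. exists w; repeat split; auto; lia. Qed.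

Lemma reachable_within_trans m n x y z :
  reachable_within m x y -> reachable_within n y z -> reachable_within (m + n) x z.
Proof.
  intros [u [Hu [Hlu Hxy]]] [v [Hv [Hlv Hyz]]].
  exists (u ++ v); repeat split.
  - apply Forall_app; auto.
  - rewrite length_app; lia.
  - rewrite act_app; congruence.
Qed.

Lemma reachable_within_mul_l (Hassoc : associative_op mul) n z x y :
  reachable_within n x y -> reachable_within n (mul z x) (mul z y).
Proof.
  intros [w [Hw [Hl Hxy]]]. exists w; repeat split; auto.
  rewrite act_mul_l by exact Hassoc. congruence.
Qed.

Lemma d_A_le_within n x y :
  reachable_within n x y -> Rbar_le (d_A mul A x y) (INR n).
Proof.
  intros [w [Hw [Hl Hxy]]].
  apply Rbar_le_trans with (INR (length w)).
  - apply (proj1 (Glb_Rbar_correct _)). exists w; auto.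
  - apply le_INR, Hl.
Qed.

Lemma d_A_attained x y : reachable x y ->
  exists w, word_over A w /\ act mul x w = y /\ d_A mul A x y = Finite (INR (length w)).
Proof.
  intros Hxy.
  set (P n := exists w, word_over A w /\ act mul x w = y /\ length w = n).
  destruct (Wf_nat.dec_inh_nat_subset_has_unique_least_element P)
    as [n [[[w [Hw [Hxw Hn]]] Hmin] _]].
  - intros n; apply classic.
  - destruct Hxy as [w [Hw Hxw]]. exists (length w), w; auto.
  - exists w; repeat split; auto.
    apply Rbar_le_antisym.
    + apply d_A_le_within. exists w; auto.
    + apply (proj2 (Glb_Rbar_correct _)). intros r [w' [Hw' [Hxw' ->]]].
      simpl. apply le_INR. rewrite Hn. apply Hmin. exists w'; auto.
Qed.

Lemma d_A_unreachable x y : ~ reachable x y -> d_A mul A x y = p_infty.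
Proof.
  intros Hxy. apply Rbar_le_antisym.
  - destruct (d_A mul A x y); exact I.
  - apply (proj2 (Glb_Rbar_correct _)). intros r [w [Hw [Hxw _]]].
    exfalso; apply Hxy. exists w; auto.
Qed.

Lemma d_A_cases x y : d_A mul A x y = p_infty \/
  exists w, word_over A w /\ act mul x w = y /\ d_A mul A x y = Finite (INR (length w)).
Proof.
  destruct (classic (reachable x y)) as [Hxy|Hxy].
  - right; apply d_A_attained, Hxy.
  - left; apply d_A_unreachable, Hxy.
Qed.

Lemma d_A_finite_iff_reachable x y : d_A mul A x y <> p_infty <-> reachable x y.
Proof.
  split.
  - intros Hfin. apply NNPP. intros Hxy. apply Hfin, d_A_unreachable, Hxy.
  - intros Hxy. destruct (d_A_attained x y Hxy) as [w [_ [_ ->]]]. discriminate.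
Qed.

Lemma d_A_nonneg x y : Rbar_le (Finite 0) (d_A mul A x y) /\ d_A mul A x y <> m_infty.
Proof.
  destruct (d_A_cases x y) as [-> | [w [_ [_ ->]]]].
  - split; [exact I | discriminate].
  - split; [apply pos_INR | discriminate].
Qed.

Lemma d_A_eq0 x y : d_A mul A x y = Finite 0 <-> x = y.
Proof.
  split.
  - destruct (d_A_cases x y) as [-> | [w [_ [Hxy ->]]]]; [discriminate|].
    intros Hw. injection Hw as Hw. change 0 with (INR 0) in Hw.
    apply INR_eq, length_zero_iff_nil in Hw. subst w. exact Hxy.
  - intros <-. apply Rbar_le_antisym.
    + apply (d_A_le_within 0). exists []; repeat split; constructor.
    + apply d_A_nonneg.
Qed.

Lemma d_A_triangle x y z :
  Rbar_le (d_A mul A x z) (Rbar_plus (d_A mul A x y) (d_A mul A y z)).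
Proof.
  destruct (d_A_cases x y) as [-> | [u [Hu [Hxy ->]]]];
  destruct (d_A_cases y z) as [-> | [v [Hv [Hyz ->]]]];
  try (destruct (d_A mul A x z); exact I).
  simpl. rewrite <- plus_INR. apply d_A_le_within.
  apply (reachable_within_trans _ _ _ y).
  - exists u; auto.
  - exists v; auto.
Qed.

Lemma d_A_semimetric : semimetric (d_A mul A).
Proof.
  split; [exact d_A_nonneg | split; [exact d_A_eq0 | exact d_A_triangle]].
Qed.

End Distance.

Section RightSimple.
Context {S : Type} (mul : S -> S -> S) (A : list S).
Hypotheses (Hassoc : associative_op mul) (Hgen : generated_by mul A).

Lemma mul1_iff_reachable x y :
  (exists u : option S, y = mul1 mul x u) <-> reachable mul A x y.
Proof.
  split.
  - intros [[s|] ->]; simpl.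
    + destruct (Hgen s) as [c [w [Hw ->]]]. exists (c :: w). split; [exact Hw|].
      rewrite act_cons. apply act_mul_l, Hassoc.
    + exists []. split; [constructor | reflexivity].
  - intros [[|c w] [_ <-]].
    + exists None; reflexivity.
    + exists (Some (act mul c w)). rewrite act_cons. apply act_mul_l, Hassoc.
Qed.

Lemma right_simple_iff_reachable :
  right_simple mul <-> forall x y, reachable mul A x y.
Proof.
  split.
  - intros Hrs x y. apply mul1_iff_reachable.
    apply (Hrs x y y). exists None; reflexivity.
  - intros Hreach x y z.
    rewrite !mul1_iff_reachable. split; intros _; apply Hreach.
Qed.

End RightSimple.

Lemma list_uniform_bound {T : Type} (Q : T -> nat -> Prop) (l : list T) :
  (forall t m n, (m <= n)%nat -> Q t m -> Q t n) ->
  (forall t, In t l -> exists n, Q t n) -> exists N, forall t, In t l -> Q t N.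
Proof.
  intros Hmono. induction l as [|t l IH]; intros Hl.
  - exists 0%nat; intros t [].
  - destruct (Hl t (or_introl eq_refl)) as [n Hn].
    destruct IH as [N HN]. { intros t' Ht'; apply Hl; right; exact Ht'. }
    exists (Nat.max n N). intros t' [<- | Ht'].
    + apply (Hmono _ n); [lia | exact Hn].
    + apply (Hmono _ N); [lia | apply HN, Ht'].
Qed.

Section QuasiSymmetry.
Context {S : Type} (mul : S -> S -> S) (A : list S).
Hypotheses (Hassoc : associative_op mul) (Hgen : generated_by mul A).

Definition ends_with (z b : S) : Prop := z = b \/ exists z', z = mul z' b.

Lemma act_ends_with w : forall z b, In b A -> ends_with z b -> word_over A w ->
  exists b', In b' A /\ ends_with (act mul z w) b'.
Proof.
  induction w as [|a w IH]; intros z b Hb Hz Hw.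
  - exists b; auto.
  - inversion Hw; subst. apply (IH (mul z a) a); auto. right; eauto.
Qed.

Lemma ends_with_generator x : exists b, In b A /\ ends_with x b.
Proof.
  destruct (Hgen x) as [c [w [Hw ->]]]. inversion Hw; subst.
  apply (act_ends_with w c c); auto. left; reflexivity.
Qed.

Lemma uniform_return_bound :
  (forall x y, reachable mul A x y) ->
  exists L, forall b a, In b A -> In a A -> reachable_within mul A L (mul b a) b.
Proof.
  intros Hreach.
  destruct (list_uniform_bound
              (fun p n => reachable_within mul A n (mul (fst p) (snd p)) (fst p))
              (list_prod A A)) as [L HL].
  - intros p m n Hmn. apply reachable_within_mono, Hmn.
  - intros [b a] _. destruct (Hreach (mul b a) b) as [u [Hu Hba]].
    exists (length u), u; auto.
  - exists L. intros b a Hb Ha. apply (HL (b, a)), in_prod_iff; auto.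
Qed.

Lemma return_along_word L :
  (forall b a, In b A -> In a A -> reachable_within mul A L (mul b a) b) ->
  forall w z b, word_over A w -> In b A -> ends_with z b ->
  reachable_within mul A (L * length w) (act mul z w) z.
Proof.
  intros HL. induction w as [|a w IH]; intros z b Hw Hb Hz.
  - exists []. repeat split; [constructor | simpl; lia].
  - inversion Hw; subst.
    rewrite act_cons. simpl length. rewrite Nat.mul_succ_r.
    apply (reachable_within_trans mul A _ _ _ (mul z a)).
    + apply (IH _ a); auto. right; eauto.
    + destruct Hz as [-> | [z' ->]]; [apply HL; auto|].
      rewrite <- Hassoc. apply reachable_within_mul_l, HL; auto.
Qed.

Lemma d_A_quasi_symmetric :
  (forall x y, reachable mul A x y) ->
  exists lam eps : R, 1 <= lam /\ 0 <= eps /\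
    forall x y, Rbar_le (d_A mul A y x)
                        (Rbar_plus (Rbar_mult (Finite lam) (d_A mul A x y)) (Finite eps)).
Proof.
  intros Hreach.
  destruct (uniform_return_bound Hreach) as [L HL].
  exists (INR L + 1), 0. pose proof (pos_INR L).
  split; [lra | split; [lra|]].
  intros x y.
  destruct (d_A_attained mul A x y (Hreach x y)) as [w [Hw [<- ->]]].
  destruct ends_with_generator with x as [b [Hb Hx]].
  apply Rbar_le_trans with (INR (L * length w)).
  - apply d_A_le_within, (return_along_word L HL w x b); auto.
  - simpl. rewrite mult_INR. pose proof (pos_INR (length w)). nra.
Qed.

End QuasiSymmetry.

Theorem proposition8p2 (S : Type) (mul : S -> S -> S) (A : list S)
  (Hassoc : associative_op mul) (Hgen : generated_by mul A) :
  right_simple mul <-> quasi_metric (d_A mul A).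
Proof.
  rewrite (right_simple_iff_reachable mul A Hassoc Hgen).
  split.
  - intros Hreach. split; [apply d_A_semimetric | split].
    + intros x y. apply d_A_finite_iff_reachable, Hreach.
    + apply d_A_quasi_symmetric; assumption.
  - intros [_ [Hfin _]] x y. apply d_A_finite_iff_reachable, Hfin.
Qed.
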